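(* Let $n\geq 5$. Every optimal anticode of diameter $2$ in $S_n$ with respect to the Kendall's $\tau$-distance is a sphere of radius $1$, i.e., a set of the form $\{\pi\in S_n : d_K(\sigma,\pi)\leq 1\}$ for some $\sigma\in S_n$; its size is $n$.
   Context: $S_n$ denotes the set of all permutations of $[n]=\{1,\dots,n\}$, written $\sigma=[\sigma(1),\dots,\sigma(n)]$. An adjacent transposition applied to $\sigma$ exchanges the entries in positions $i$ and $i+1$ for some $1\leq i\leq n-1$. The Kendall's $\tau$-distance $d_K(\sigma,\pi)$ is the minimum number of adjacent transpositions needed to transform $\sigma$ into $\pi$. An anticode of diameter $D$ is a subset $\mathcal{A}\subseteq S_n$ with $d_K(x,y)\leq D$ for all $x,y\in\mathcal{A}$; it is optimal if it has the largest possible size among all anticodes of diameter $D$ in $S_n$. *)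

From mathcomp Require Import all_boot all_order all_fingroup.
Set Implicit Arguments. Unset Strict Implicit. Unset Printing Implicit Defensive.

(* Permutations of [n] are modelled as 'S_n = {perm 'I_n} (positions and
   values 0..n-1).  An adjacent transposition at positions (a, a+1) turns
   sigma into  tperm a b * sigma  (with val b = (val a).+1), whose value at
   position k is sigma (tperm a b k), i.e. the entries at positions a and a+1
   are exchanged. *)

Definition apply_adj n (l : seq ('I_n * 'I_n)) (s : 'S_n) : 'S_n :=
  foldr (fun p q => (tperm p.1 p.2 * q)%g) s l.

Definition adjacent_pairs n (l : seq ('I_n * 'I_n)) : bool :=
  all (fun p => val p.2 == (val p.1).+1) l.

Definition dK_le n (k : nat) (s t : 'S_n) : Prop :=
  exists l : seq ('I_n * 'I_n),
    [/\ size l <= k, adjacent_pairs l & t = apply_adj l s].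

Definition is_anticode n (D : nat) (A : {set 'S_n}) : Prop :=
  forall x y, x \in A -> y \in A -> dK_le D x y.

Definition optimal_anticode n (D : nat) (A : {set 'S_n}) : Prop :=
  is_anticode D A /\ forall B : {set 'S_n}, is_anticode D B -> #|B| <= #|A|.

(* Every adjacent transposition reverses the relative order of exactly one pair
   of values, so d_K(s, t) is at least the number of pairs of values ordered
   differently by s and t, and a permutation is determined by its set of such
   pairs relative to the identity.  Adjacent transpositions change the parity,
   so two members of a diameter-2 anticode of different parities are adjacent,
   while two members of equal parity have at most two common neighbours.
   Hence in an anticode of size n >= 5 at most one member has the minority
   parity, and if there is one it is the centre of a radius-1 ball containing
   the anticode.  Otherwise, after translating the anticode to contain the
   identity, each of its (at least four) other members has exactly two
   inversions, any two of these inversion sets meet, and so they all share an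
   inversion (u, v).  If v = u + 1 the transposition of u and u + 1 is a
   centre; if not, the inversion sets can only be {(u,v), (u,u+1)} or
   {(u,v), (u+1,v)}, which leaves room for only two members.  Finally a ball
   of radius 1 has exactly n elements and is itself an anticode. *)

From mathcomp Require Import all_boot all_order all_fingroup zify.
Set Implicit Arguments. Unset Strict Implicit. Unset Printing Implicit Defensive.
Local Open Scope group_scope.

Section KendallDistance.
Variable n : nat.
Implicit Types (s t g : 'S_n) (a b c d : 'I_n).

Definition adj_step s t :=
  exists a b, val b = (val a).+1 /\ t = tperm a b * s.

Lemma adj_neq a b : val b = (val a).+1 -> a != b.
Proof. by move=> hb; apply/eqP=> eab; move: hb; rewrite eab; lia. Qed.

Lemma adj_ltn a b : val b = (val a).+1 -> a < b.
Proof. by rewrite /= => ->. Qed.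

Lemma adj_val_inj a b a' b' :
  val b = (val a).+1 -> val b' = (val a').+1 -> val a = val a' -> a = a' /\ b = b'.
Proof. by move=> hb hb' e; split; apply: val_inj; rewrite ?hb ?hb' e. Qed.

Lemma tpermKg a b s : tperm a b * (tperm a b * s) = s.
Proof. by rewrite mulgA tperm2 mul1g. Qed.

Lemma apply_adj_cat l1 l2 s : apply_adj (l1 ++ l2) s = apply_adj l1 (apply_adj l2 s).
Proof. by rewrite /apply_adj foldr_cat. Qed.

Lemma apply_adj_mulr l s g : apply_adj l (s * g) = apply_adj l s * g.
Proof. by elim: l => //= p l ->; rewrite mulgA. Qed.

Lemma apply_adj_rev l s : apply_adj (rev l) (apply_adj l s) = s.
Proof.
elim: l s => //= p l IH s.
by rewrite rev_cons -cats1 apply_adj_cat /= tpermKg IH.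
Qed.

Lemma dK_refl k s : dK_le k s s.
Proof. by exists [::]. Qed.

Lemma dK_sym k s t : dK_le k s t -> dK_le k t s.
Proof.
case=> l [hl ha ->]; exists (rev l).
by rewrite size_rev /adjacent_pairs all_rev apply_adj_rev.
Qed.

Lemma dK_trans k1 k2 s t u : dK_le k1 s t -> dK_le k2 t u -> dK_le (k1 + k2) s u.
Proof.
case=> l1 [h1 a1 ->] [l2 [h2 a2 ->]]; exists (l2 ++ l1).
split; first by rewrite size_cat addnC leq_add.
  by rewrite /adjacent_pairs all_cat; apply/andP.
by rewrite apply_adj_cat.
Qed.

Lemma dK_mulr k s t g : dK_le k s t -> dK_le k (s * g) (t * g).
Proof. by case=> l [hl ha ->]; exists l; rewrite apply_adj_mulr. Qed.

Lemma dK_step a b s : val b = (val a).+1 -> dK_le 1 s (tperm a b * s).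
Proof. by move=> hb; exists [:: (a, b)]; rewrite /adjacent_pairs /= hb eqxx. Qed.

Lemma dK1P s t : dK_le 1 s t <-> t = s \/ adj_step s t.
Proof.
split=> [[[|p [|? ?]] [//= _ ha ->]]|[->|[a [b [hb ->]]]]].
- by left.
- by right; exists p.1, p.2; move: ha; rewrite /adjacent_pairs /= andbT => /eqP.
- exact: dK_refl.
- exact: dK_step.
Qed.

Lemma dK2_cases s t : dK_le 2 s t ->
  [\/ t = s, adj_step s t | exists2 u, adj_step s u & adj_step u t].
Proof.
case=> [[|p [|q [|? ?]]] [//= _ ha ->]]; first by constructor 1.
  by constructor 2; exists p.1, p.2; move: ha; rewrite /adjacent_pairs /= andbT => /eqP.
move: ha; rewrite /adjacent_pairs /= andbT => /andP[/eqP hp /eqP hq].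
by constructor 3; exists (tperm q.1 q.2 * s); [exists q.1, q.2 | exists p.1, p.2].
Qed.

Lemma odd_adj_step s t : adj_step s t -> odd_perm t = ~~ odd_perm s.
Proof. by case=> a [b [hb ->]]; rewrite odd_permM odd_tperm adj_neq. Qed.

Lemma dK2_odd s t : dK_le 2 s t -> odd_perm s != odd_perm t -> adj_step s t.
Proof.
case/dK2_cases => [->|//|[u /odd_adj_step hu /odd_adj_step ht]]; first by rewrite eqxx.
by rewrite ht hu negbK eqxx.
Qed.

Lemma dK2_even s t : dK_le 2 s t -> odd_perm s = odd_perm t -> t != s ->
  exists a b c d, [/\ val b = (val a).+1, val d = (val c).+1, val c != val a &
                     t = tperm c d * (tperm a b * s)].
Proof.
case/dK2_cases => [->|/odd_adj_step ->|]; first by rewrite eqxx.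
  by case: (odd_perm s).
case=> _ [a [b [hb ->]]] [c [d [hd ->]]] _ hne; exists a, b, c, d; split=> //.
apply: contra_neq hne => eca; have [-> ->] := adj_val_inj hd hb eca.
by rewrite tpermKg.
Qed.

End KendallDistance.

Section Discordance.
Variable n : nat.
Implicit Types (s t u : 'S_n) (a b c d : 'I_n) (p : 'I_n * 'I_n).

(* A permutation maps positions to values; [inv_at s (x, y)] says that the
   value y occurs before the value x in s. *)
Definition inv_at s p := s^-1 p.2 < s^-1 p.1.

Definition discord s t := [set p : 'I_n * 'I_n | (p.1 < p.2) && (inv_at s p != inv_at t p)].

Lemma discord_lt s t p : p \in discord s t -> p.1 < p.2.
Proof. by rewrite inE => /andP[]. Qed.

Definition at_positions s a b p :=
  ((s^-1 p.1 == a) && (s^-1 p.2 == b)) || ((s^-1 p.1 == b) && (s^-1 p.2 == a)).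

Lemma val_tperm a b (x : 'I_n) : val (tperm a b x) =
  if val x == val a then val b else if val x == val b then val a else val x.
Proof.
case: tpermP => [->|->|/eqP xa /eqP xb]; rewrite ?eqxx //.
  by case: eqP => // /val_inj ->.
by rewrite !val_eqE (negPf xa) (negPf xb).
Qed.

Lemma inv_at_step a b s p : val b = (val a).+1 -> p.1 != p.2 ->
  inv_at (tperm a b * s) p = inv_at s p (+) at_positions s a b p.
Proof.
move=> hb hp; rewrite /inv_at /at_positions invMg tpermV !permM.
have : s^-1 p.1 != s^-1 p.2 by rewrite (inj_eq perm_inj).
move: (s^-1 p.1) (s^-1 p.2) => x y.
rewrite -!val_eqE -[(tperm a b y < _)]/(val _ < val _) -[(y < x)]/(val _ < val _).
rewrite !val_tperm hb; move: (val x) (val y) (val a) => {}x {}y a'.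
by case: (x =P a'); case: (y =P a'); case: (x =P a'.+1); case: (y =P a'.+1) => /=; lia.
Qed.

Lemma in_discord_step s t a b p : val b = (val a).+1 ->
  (p \in discord s (tperm a b * t)) =
  (p \in discord s t) (+) ((p.1 < p.2) && at_positions t a b p).
Proof.
move=> hb; rewrite !inE; case lt12: (p.1 < p.2) => //=.
have hp : p.1 != p.2 by rewrite -val_eqE neq_ltn lt12.
by rewrite inv_at_step //; case: (inv_at s p); case: (inv_at t p); case: at_positions.
Qed.

Lemma card_at_positions t a b :
  #|[set p : 'I_n * 'I_n | (p.1 < p.2) && at_positions t a b p]| <= 1.
Proof.
apply/card_le1_eqP => -[x1 x2] [y1 y2]; rewrite !inE /at_positions /=.
case/andP=> x12 /orP[]/andP[/eqP xa /eqP xb]; case/andP=> y12 /orP[]/andP[/eqP ya /eqP yb];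
  rewrite -(permKV t x1) -(permKV t x2) -(permKV t y1) -(permKV t y2) xa xb ya yb // in x12 y12 *;
  by have := ltn_trans x12 y12; rewrite ltnn.
Qed.

Lemma card_discord_step s t a b : val b = (val a).+1 ->
  #|discord s (tperm a b * t)| <= #|discord s t|.+1.
Proof.
move=> hb; set F := [set p : 'I_n * 'I_n | (p.1 < p.2) && at_positions t a b p].
have sub : discord s (tperm a b * t) \subset discord s t :|: F.
  apply/subsetP => p; rewrite in_discord_step // !inE.
  by case: (_ && (_ != _)); case: (_ && at_positions _ _ _ _).
apply: leq_trans (subset_leq_card sub) _; apply: leq_trans (leq_card_setU _ _) _.
by rewrite -addn1 leq_add2l card_at_positions.
Qed.

Lemma discord_refl s : discord s s = set0.
Proof. by apply/setP => p; rewrite !inE eqxx andbF. Qed.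

Lemma card_discord_le k s t : dK_le k s t -> #|discord s t| <= k.
Proof.
case=> l [hl ha ->]; apply: leq_trans hl.
elim: l ha => [|p l IH] /=; first by rewrite discord_refl cards0.
case/andP => /eqP hp hl.
by apply: leq_trans (card_discord_step _ _ hp) _; rewrite ltnS IH.
Qed.

Lemma in_discord_xor s t u p :
  (p \in discord t u) = (p.1 < p.2) && ((p \in discord s t) != (p \in discord s u)).
Proof.
rewrite !inE; case: (p.1 < p.2) => //=.
by case: (inv_at s p); case: (inv_at t p); case: (inv_at u p).
Qed.

Lemma card_ltn_ord (k : 'I_n) : #|[set i : 'I_n | i < k]| = k.
Proof.
have le_kn : k <= n := ltnW (ltn_ord k).
have widen_inj : injective (widen_ord le_kn).
  by move=> i j e; apply: val_inj; exact: (congr1 val e).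
rewrite -{2}[nat_of_ord k]card_ord -(card_imset _ widen_inj).
apply: eq_card => i; rewrite !inE; apply/idP/imsetP => [ik|[j _ ->]]; last exact: (ltn_ord j).
by exists (Ordinal ik) => //; apply: val_inj.
Qed.

Lemma val_perm_rank (f : 'S_n) x : val (f x) = #|[set y | f y < f x]|.
Proof.
have -> : [set y | f y < f x] = f @^-1: [set i : 'I_n | i < f x] by apply/setP => y; rewrite !inE.
by rewrite card_preimset ?card_ltn_ord //; apply: perm_inj.
Qed.

Lemma discord_eq0 s t : discord s t = set0 -> s = t.
Proof.
move=> h.
have flip (u v : 'I_n) : u < v -> (s^-1 v < s^-1 u) = (t^-1 v < t^-1 u).
  move=> uv; have : (u, v) \notin discord s t by rewrite h inE.
  by rewrite inE /= uv negbK => /eqP.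
have same (u v : 'I_n) : (s^-1 u < s^-1 v) = (t^-1 u < t^-1 v).
  case: (ltngtP u v) => [uv|vu|/val_inj ->]; last by rewrite !ltnn.
    have swap (f : 'S_n) : (f^-1 u < f^-1 v) = ~~ (f^-1 v < f^-1 u).
      rewrite ltnNge (leq_eqVlt (f^-1 v)) val_eqE (inj_eq perm_inj).
      by rewrite -val_eqE gtn_eqF.
    by rewrite !swap flip.
  exact: flip.
apply: invg_inj; apply/permP => u; apply: val_inj.
by rewrite (val_perm_rank s^-1) (val_perm_rank t^-1); apply: eq_card => v; rewrite !inE same.
Qed.

Lemma discord_inj s : injective (discord s).
Proof.
move=> t u e; apply: discord_eq0; apply/setP => p.
by rewrite (in_discord_xor s) e eqxx andbF inE.
Qed.

Lemma in_discord1 t p : (p \in discord 1 t) = (p.1 < p.2) && (t^-1 p.2 < t^-1 p.1).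
Proof.
rewrite inE /inv_at invg1 !perm1; case: ltnP => //= p12.
by rewrite [p.2 < p.1]ltnNge (ltnW p12); case: (_ < _).
Qed.

Lemma discord1_trans t (u v w : 'I_n) :
  (u, v) \in discord 1 t -> (v, w) \in discord 1 t -> (u, w) \in discord 1 t.
Proof.
rewrite !in_discord1 /= => /andP[uv vu] /andP[vw wv].
by rewrite (ltn_trans uv vw) (ltn_trans wv vu).
Qed.

Lemma discord1_split t (u v w : 'I_n) : u < v -> v < w ->
  (u, w) \in discord 1 t -> ((u, v) \in discord 1 t) || ((v, w) \in discord 1 t).
Proof.
rewrite !in_discord1 /= => uv vw /andP[_ wu]; rewrite uv vw /=.
by case: (ltnP (t^-1 v) (t^-1 u)) => //= uv'; apply: leq_trans wu uv'.
Qed.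

Lemma discord1_step_fixed t a b : val b = (val a).+1 -> t a = a -> t b = b ->
  ((a, b) \in discord 1 (tperm a b * t)) = ((a, b) \notin discord 1 t).
Proof.
move=> hb ta tb; have tVa : t^-1 a = a by rewrite -{1}ta permK.
have tVb : t^-1 b = b by rewrite -{1}tb permK.
by rewrite in_discord_step // /at_positions tVa tVb !eqxx andbT (adj_ltn hb) addbT.
Qed.

Lemma discord1_tperm a b : val b = (val a).+1 -> discord 1 (tperm a b * 1) = [set (a, b)].
Proof.
move=> hb; apply/setP => -[x y].
rewrite in_discord_step // discord_refl !inE /at_positions invg1 !perm1 /= xpair_eqE.
apply/idP/idP => [/andP[xy /orP[//|/andP[/eqP xb /eqP ya]]]|/andP[/eqP-> /eqP->]].
  by move: xy; rewrite xb ya ltnNge ltnW // adj_ltn.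
by rewrite adj_ltn // !eqxx.
Qed.

Lemma discord1_step2 a b c d :
  val b = (val a).+1 -> val d = (val c).+1 -> val c != val a ->
  (a, b) \in discord 1 (tperm c d * (tperm a b * 1)).
Proof.
move=> hb hd ca; rewrite in_discord_step // discord1_tperm // set11 /=.
rewrite /at_positions mulg1 tpermV tpermL tpermR -!val_eqE.
by apply/negP => /andP[_]; move: ca; simpl in *; lia.
Qed.

End Discordance.

Section IntersectingPairs.
Variable T : finType.
Implicit Types (U V X Y : {set T}) (F : {set {set T}}).

Lemma card_le2_set2E V x y : #|V| <= 2 -> x \in V -> y \in V -> x != y ->
  V = [set x; y].
Proof.
move=> V2 xV yV xy; apply/esym/eqP.
by rewrite eqEcard cards2 xy V2 subUset !sub1set xV yV.
Qed.

Lemma card2_subset V U x y : #|V| = 2 -> x \in V -> y \in V -> x != y ->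
  x \in U -> y \in U -> V \subset U.
Proof.
move=> V2 xV yV xy xU yU; rewrite (card_le2_set2E _ xV yV xy) ?V2 //.
by rewrite subUset !sub1set xU yU.
Qed.

Lemma card2_meet_le1 X Y : #|X| = 2 -> #|Y| = 2 -> X != Y -> #|X :&: Y| <= 1.
Proof.
move=> X2 Y2 XY; rewrite leqNgt; apply: contra XY => meet2.
have eqX : X :&: Y = X by apply/eqP; rewrite eqEcard subsetIl X2.
have eqY : X :&: Y = Y by apply/eqP; rewrite eqEcard subsetIr Y2.
by rewrite -{1}eqX eqY.
Qed.

(* Without a common point, such a family consists of 2-subsets of a 3-set. *)
Lemma intersecting_pairs_common F :
  {in F, forall X, #|X| = 2} -> {in F &, forall X Y, X :&: Y != set0} ->
  3 < #|F| -> exists x, {in F, forall X, x \in X}.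
Proof.
move=> F2 Fmeet F4.
have [X [Y [XF YF XY]]] := card_gt1P (ltn_trans (isT : 1 < 3) F4).
have [p pXY] := set0Pn _ (Fmeet X Y XF YF).
have XY1 := card2_meet_le1 (F2 X XF) (F2 Y YF) XY.
case: (boolP [forall V in F, p \in V]) => [/forall_inP|]; first by exists p.
rewrite negb_forall_in => /exists_inP[W WF pW].
set U := X :|: Y.
have sub_noP V : V \in F -> p \notin V -> V \subset U.
  move=> VF pV.
  have [x] := set0Pn _ (Fmeet V X VF XF); rewrite inE => /andP[xV xX].
  have [y] := set0Pn _ (Fmeet V Y VF YF); rewrite inE => /andP[yV yY].
  apply: (card2_subset (F2 V VF) xV yV); rewrite ?inE ?xX ?yY ?orbT //.
  apply: contraNneq pV => exy; have xXY : x \in X :&: Y by rewrite inE xX exy.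
  by rewrite -((card_le1_eqP XY1) _ _ pXY xXY).
have sub_all V : V \in F -> V \subset U.
  move=> VF; case: (boolP (p \in V)) => pV; last exact: sub_noP.
  have [w] := set0Pn _ (Fmeet V W VF WF); rewrite inE => /andP[wV wW].
  apply: (card2_subset (F2 V VF) pV wV); first by apply: contraNneq pW => ->.
    by move: pXY; rewrite !inE => /andP[->].
  exact: subsetP (sub_noP W WF pW) w wW.
have U3 : #|U| <= 3.
  have : 0 < #|X :&: Y| by apply/card_gt0P; exists p.
  by rewrite cardsU (F2 X XF) (F2 Y YF); lia.
have : F \subset [set V : {set T} | V \subset U & #|V| == 2].
  by apply/subsetP => V VF; rewrite inE sub_all //= F2.
move/subset_leq_card; rewrite cards_draws => le_bin.
by have := leq_trans F4 (leq_trans le_bin (leq_bin2l 2 U3)).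
Qed.

End IntersectingPairs.

Section SameParity.
Variable n : nat.
Implicit Types (y z : 'S_n) (a b c d u v w : 'I_n).

Lemma no_three_in_discord1 z (x y x' : 'I_n * 'I_n) : dK_le 2 1 z ->
  x \in discord 1 z -> y \in discord 1 z -> x' \in discord 1 z ->
  [&& x != y, y != x' & x' != x] -> False.
Proof.
move=> z2 xz yz x'z /and3P[xy yx' x'x].
have : 2 < #|discord 1 z| by apply/card_gt2P; exists x, y, x'.
by rewrite ltnNge card_discord_le.
Qed.

Lemma card_discord1_even z : dK_le 2 1 z -> ~~ odd_perm z -> z != 1 ->
  #|discord 1 z| = 2.
Proof.
move=> z2 ev nz1; apply/eqP; rewrite eqn_leq card_discord_le //=.
have par : odd_perm (1 : 'S_n) = odd_perm z by rewrite odd_perm1 (negPf ev).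
have [a [b [c [d [hb hd ca ez]]]]] := dK2_even z2 par nz1.
have ab := discord1_step2 hb hd ca; rewrite -ez in ab.
have : [set (a, b)] \proper discord 1 z.
  rewrite properEneq sub1set ab andbT; apply: contraTneq ev => eD; rewrite negbK.
  have -> : z = tperm a b * 1 by apply: (@discord_inj _ 1); rewrite -eD discord1_tperm.
  by rewrite odd_permM odd_perm1 odd_tperm adj_neq.
by move/proper_card; rewrite cards1.
Qed.

Lemma discord1_meet y z : #|discord 1 y| = 2 -> #|discord 1 z| = 2 -> dK_le 2 y z ->
  discord 1 y :&: discord 1 z != set0.
Proof.
move=> y2 z2 yz; apply/negP => /eqP disj.
have : discord 1 y :|: discord 1 z \subset discord y z.
  apply/subsetP => p; rewrite (in_discord_xor 1) inE.
  have notboth : ~~ ((p \in discord 1 y) && (p \in discord 1 z)).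
    by rewrite -in_setI disj inE.
  case/orP=> pD; rewrite (discord_lt pD) /=.
    by move: notboth; rewrite pD; case: (p \in discord 1 z).
  by move: notboth; rewrite pD andbT => /negPf ->.
move/subset_leq_card; rewrite cardsU disj cards0 y2 z2 => le4.
by have := leq_trans le4 (card_discord_le yz).
Qed.

Lemma discord1_adj_far z a b u v : dK_le 2 1 z ->
  val b = (val a).+1 -> val v = (val u).+1 -> val a != val u ->
  (a, b) \in discord 1 z -> (u, v) \in discord 1 z -> val u != val b /\ val v != val a.
Proof.
move=> z2 hb hv ua abz uvz.
have third (x : 'I_n * 'I_n) : x \in discord 1 z -> x != (a, b) -> x != (u, v) -> False.
  move=> xz xab xuv; apply: (no_three_in_discord1 z2 abz uvz xz).
  by rewrite xab [(u, v) == x]eq_sym xuv xpair_eqE -val_eqE (negPf ua).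
split; apply/negP => /eqP/val_inj e; rewrite e in uvz.
  apply: (third (a, v) (discord1_trans abz uvz)); rewrite xpair_eqE -!val_eqE;
    by apply/negP => /andP[/eqP ? /eqP ?]; simpl in *; lia.
apply: (third (u, b) (discord1_trans uvz abz)); rewrite xpair_eqE -!val_eqE;
  by apply/negP => /andP[/eqP ? /eqP ?]; simpl in *; lia.
Qed.

Lemma discord1_adj_pairs z a b u v : dK_le 2 1 z ->
  val b = (val a).+1 -> val v = (val u).+1 -> val a != val u ->
  (a, b) \in discord 1 z -> (u, v) \in discord 1 z -> z = tperm a b * (tperm u v * 1).
Proof.
move=> z2 hb hv ua abz uvz; have [ub va] := discord1_adj_far z2 hb hv ua abz uvz.
set w := tperm a b * (tperm u v * 1).
have uvw : (u, v) \in discord 1 w by apply: discord1_step2; rewrite // eq_sym.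
have abw : (a, b) \in discord 1 w.
  have [fa fb] : (tperm u v * 1) a = a /\ (tperm u v * 1) b = b.
    by rewrite mulg1; split; apply: tpermD; rewrite -val_eqE; simpl in *; lia.
  by rewrite discord1_step_fixed // discord1_tperm // inE xpair_eqE -val_eqE (negPf ua).
have w2 : dK_le 2 1 w := dK_trans (dK_step 1 hv) (dK_step _ hb).
have abuv : (a, b) != (u, v) by rewrite xpair_eqE -val_eqE (negPf ua).
apply: (@discord_inj _ 1).
rewrite (card_le2_set2E (card_discord_le z2) abz uvz abuv).
by rewrite (card_le2_set2E (card_discord_le w2) abw uvw abuv).
Qed.

Lemma adj_center z u v : val v = (val u).+1 -> dK_le 2 1 z -> ~~ odd_perm z ->
  z != 1 -> (u, v) \in discord 1 z -> adj_step (tperm u v * 1) z.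
Proof.
move=> hv z2 ev nz1 uvz.
have par : odd_perm (1 : 'S_n) = odd_perm z by rewrite odd_perm1 (negPf ev).
have [a [b [c [d [hb hd ca ez]]]]] := dK2_even z2 par nz1.
have abz : (a, b) \in discord 1 z by rewrite ez; apply: discord1_step2.
case: (eqVneq (val a) (val u)) => [au|ua].
  by have [ea eb] := adj_val_inj hb hv au; exists c, d; rewrite ez ea eb.
by exists a, b; rewrite (discord1_adj_pairs z2 hb hv ua abz uvz).
Qed.

Lemma discord1_nonadj z u v w : #|discord 1 z| = 2 -> (u, v) \in discord 1 z ->
  val w = (val u).+1 -> val v != val w ->
  discord 1 z \in [set [set (u, v); (u, w)]; [set (u, v); (w, v)]].
Proof.
move=> z2 uvz hw vw; have uv := discord_lt uvz.
have uw : u < w by rewrite /= hw.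
have wv : w < v by move: vw; simpl in *; lia.
have le2 : #|discord 1 z| <= 2 by rewrite z2.
rewrite !inE; case/orP: (discord1_split uw wv uvz) => xz; apply/orP; [left|right];
  apply/eqP/(card_le2_set2E le2 uvz xz); rewrite xpair_eqE -!val_eqE;
  by apply/negP => /andP[/eqP ? /eqP ?]; simpl in *; lia.
Qed.

Lemma even_anticode_center A : is_anticode 2 A -> 1 \in A ->
  {in A, forall z, ~~ odd_perm z} -> 4 < #|A| ->
  exists sg, {in A, forall z, dK_le 1 sg z}.
Proof.
move=> hA A1 ev A5; set Z := A :\ 1.
have inZ z : z \in Z -> [/\ z \in A, dK_le 2 1 z, ~~ odd_perm z & z != 1].
  by rewrite in_setD1 => /andP[nz1 zA]; split=> //; [apply: hA | apply: ev].
have Z2 : {in Z, forall z, #|discord 1 z| = 2}.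
  by move=> z /inZ[_ z2 evz nz1]; apply: card_discord1_even.
set F := discord 1 @: Z.
have F4 : 3 < #|F|.
  by rewrite card_imset; [move: A5; rewrite (cardsD1 1 A) A1 | exact: discord_inj].
have [[u v] common] : exists p : 'I_n * 'I_n, {in F, forall X : {set 'I_n * 'I_n}, p \in X}.
  apply: intersecting_pairs_common F4 => [X /imsetP[z zZ ->]|X Y].
    exact: Z2.
  case/imsetP=> z zZ -> /imsetP[w wZ ->]; apply: discord1_meet; rewrite ?Z2 //.
  by case: (inZ z zZ) => zA _ _ _; case: (inZ w wZ) => wA _ _ _; apply: hA.
have uvZ z : z \in Z -> (u, v) \in discord 1 z by move=> zZ; apply/common/imset_f.
have [z0 z0Z] : exists z0, z0 \in Z.
  by apply/card_gt0P; move: F4; rewrite card_imset //; [lia | exact: discord_inj].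
have uv : u < v := discord_lt (uvZ _ z0Z).
case: (eqVneq (val v) (val u).+1) => [hv|nadj].
  exists (tperm u v * 1) => z zA; apply/dK1P; right.
  have [->|nz1] := eqVneq z 1; first by exists u, v; rewrite tpermKg.
  have zZ : z \in Z by rewrite in_setD1 nz1.
  by case: (inZ z zZ) => _ z2 evz _; apply: adj_center; rewrite ?uvZ.
have wn : (val u).+1 < n by exact: leq_ltn_trans uv (ltn_ord v).
have sub : F \subset [set [set (u, v); (u, Ordinal wn)]; [set (u, v); (Ordinal wn, v)]].
  by apply/subsetP => _ /imsetP[z zZ ->]; apply: discord1_nonadj; rewrite ?Z2 ?uvZ.
move/subset_leq_card: sub; rewrite cards2 => F2.
by move: F4; case: (_ != _) F2 => /= F2; lia.
Qed.

End SameParity.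

Section Anticodes.
Variable n : nat.
Implicit Types (s x y z : 'S_n) (A Y : {set 'S_n}).

Lemma card_common_adj x z Y : x != z -> dK_le 2 x z ->
  {in Y, forall y, adj_step x y /\ adj_step y z} -> #|Y| <= 2.
Proof.
move=> xz x2z hY.
have sub : Y \subset [set tperm p.1 p.2 * x | p in discord 1 (z * x^-1)].
  apply/subsetP => y yY; have [[a [b [hb ey]]] [c [d [hd ez]]]] := hY y yY.
  have ca : val c != val a.
    apply/negP => /eqP eca; have [ec ed] := adj_val_inj hd hb eca.
    by move: xz; rewrite ez ey ec ed tpermKg eqxx.
  apply/imsetP; exists (a, b); last by rewrite ey.
  by rewrite ez ey mulgA mulgK -[_ * tperm a b]mulg1 -mulgA; apply: discord1_step2.
apply: leq_trans (subset_leq_card sub) _; apply: leq_trans (leq_imset_card _ _) _.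
by apply: card_discord_le; rewrite -(mulgV x); apply: dK_mulr.
Qed.

Definition parity_class A b : {set 'S_n} := [set z in A | odd_perm z == b].

Lemma card_parity_classes A : #|parity_class A true| + #|parity_class A false| = #|A|.
Proof.
rewrite -(cardsID [set z | odd_perm z] A).
congr addn; apply: eq_card => z; rewrite !inE.
  by case: (odd_perm z).
by case: (odd_perm z); rewrite andbC.
Qed.

Lemma anticode_parity_class A b : is_anticode 2 A ->
  1 < #|parity_class A b| -> #|parity_class A (~~ b)| <= 2.
Proof.
move=> hA /card_gt1P[x [z [+ + xz]]]; rewrite !inE => /andP[xA /eqP xb] /andP[zA /eqP zb].
apply: (card_common_adj xz (hA _ _ xA zA)) => y; rewrite inE => /andP[yA /eqP yb].
by split; apply: dK2_odd; rewrite ?xb ?yb ?zb; [exact: hA | case: (b) | exact: hA | case: (b)].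
Qed.

Lemma odd_one_out_center A y : is_anticode 2 A -> y \in A ->
  {in A :\ y, forall z, odd_perm z != odd_perm y} -> {in A, forall z, dK_le 1 y z}.
Proof.
move=> hA yA hz z zA; apply/dK1P; have [->|zy] := eqVneq z y; [left | right] => //.
by apply: dK2_odd (hA _ _ yA zA) _; rewrite eq_sym hz // in_setD1 zy.
Qed.

Lemma anticode_center1 A : is_anticode 2 A -> 1 \in A -> 4 < #|A| ->
  exists sg, {in A, forall z, dK_le 1 sg z}.
Proof.
move=> hA A1 A5; have classes := card_parity_classes A.
have [O0|O_gt0] := posnP #|parity_class A true|.
  apply: even_anticode_center => // z zA; apply: contraT; rewrite negbK => oz.
  by move: O0 => /card0_eq/(_ z); rewrite !inE zA oz.
have [O_gt1|O_le1] := ltnP 1 #|parity_class A true|.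
  have [E_gt1|E_le1] := ltnP 1 #|parity_class A false|.
    have := anticode_parity_class hA O_gt1; have := anticode_parity_class hA E_gt1.
    rewrite /= => O_le2 E_le2; rewrite -classes in A5.
    by have := leq_trans A5 (leq_add O_le2 E_le2).
  exists 1; apply: odd_one_out_center => // z; rewrite in_setD1 odd_perm1 => /andP[nz1 zA].
  apply: contraNneq nz1 => ez.
  have zE : z \in parity_class A false by rewrite inE zA ez.
  have oneE : 1 \in parity_class A false by rewrite inE A1 odd_perm1.
  by apply/eqP; apply: (card_le1_eqP E_le1).
have /cards1P[y Oy] : #|parity_class A true| == 1%N by rewrite eqn_leq O_le1.
have : y \in parity_class A true by rewrite Oy set11.
rewrite inE => /andP[yA /eqP oy]; exists y; apply: odd_one_out_center => // z.
rewrite in_setD1 oy => /andP[zy zA]; apply: contraNneq zy => oz.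
by rewrite -in_set1 -Oy inE zA oz.
Qed.

Lemma anticode_center A : is_anticode 2 A -> 4 < #|A| ->
  exists sg, {in A, forall z, dK_le 1 sg z}.
Proof.
move=> hA A5; have [x xA] : exists x, x \in A by apply/card_gt0P; apply: leq_ltn_trans A5.
set A' := [set z * x^-1 | z in A].
have hA' : is_anticode 2 A'.
  by move=> _ _ /imsetP[z zA ->] /imsetP[w wA ->]; apply: dK_mulr; apply: hA.
have A'1 : 1 \in A' by apply/imsetP; exists x; rewrite ?mulgV.
have [|sg hsg] := anticode_center1 hA' A'1; first by rewrite card_imset //; apply: mulIg.
exists (sg * x) => z zA; rewrite -(mulgKV x z); apply: dK_mulr; apply: hsg.
exact: imset_f.
Qed.

End Anticodes.

Section Ball.
Variable n : nat.
Implicit Types (s t : 'S_n) (i : 'I_n).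

(* The last position has no right neighbour; there [swap_next] returns [s]
   itself, so that the n positions parametrise the whole ball. *)
Definition swap_next s i : 'S_n :=
  if insub (val i).+1 is Some j then tperm i j * s else s.

Definition ball s := [set swap_next s i | i : 'I_n].

Lemma swap_next_inj s : injective (swap_next s).
Proof.
have tperm_id i (j : 'I_n) : val j = (val i).+1 -> tperm i j <> 1.
  move=> hj /(congr1 (fun g : 'S_n => g i)); rewrite tpermL perm1 => eji.
  by move: hj; rewrite eji; lia.
move=> i i'; rewrite /swap_next.
case: insubP => [j _ hj|hi]; case: insubP => [j' _ hj'|hi'] => /=.
- move/mulIg/(congr1 (fun g : 'S_n => g i)); rewrite tpermL.
  case: tpermP => [// |/(congr1 val) eij' /(congr1 val) eji'|_ _ /(congr1 val) eji];
    simpl in *; lia.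
- by rewrite -{2}(mul1g s) => /mulIg /(tperm_id _ _ hj).
- by rewrite -{1}(mul1g s) => /esym /mulIg /(tperm_id _ _ hj').
- by move=> _; apply: val_inj; move: hi hi' (ltn_ord i) (ltn_ord i'); simpl in *; lia.
Qed.

Lemma card_ball s : #|ball s| = n.
Proof. by rewrite card_imset ?card_ord //; apply: swap_next_inj. Qed.

Hypothesis n_gt0 : 0 < n.

Lemma ballP s t : t \in ball s <-> dK_le 1 s t.
Proof.
rewrite dK1P; split=> [/imsetP[i _ ->]|[->|[a [b [hb ->]]]]].
- rewrite /swap_next; case: insubP => [j _ hj|_]; [right; exists i, j | left] => //.
- have last : n.-1 < n by rewrite ltn_predL.
  apply/imsetP; exists (Ordinal last) => //; rewrite /swap_next.
  by case: insubP => // j _ /= hj; have := ltn_ord j; rewrite hj; lia.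
- apply/imsetP; exists a => //; rewrite /swap_next.
  case: insubP => [j _ hj|]; last by rewrite -hb ltn_ord.
  by congr (tperm _ _ * _); apply: val_inj; rewrite hj hb.
Qed.

Lemma ball_anticode s : is_anticode 2 (ball s).
Proof. by move=> x y /ballP sx /ballP sy; apply: (dK_trans (dK_sym sx) sy). Qed.

End Ball.

Theorem theorem6 (n : nat) (hn : 5 <= n) (A : {set 'S_n}) :
  optimal_anticode 2 A ->
  (exists sigma : 'S_n, forall pi : 'S_n, pi \in A <-> dK_le 1 sigma pi)
  /\ #|A| = n.
Proof.
case=> hA hopt; have n_gt0 : 0 < n by apply: leq_trans hn.
have nA : n <= #|A| by rewrite -{1}(card_ball (1 : 'S_n)); apply/hopt/ball_anticode.
have [sg hsg] := anticode_center hA (leq_trans hn nA).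
have sub : A \subset ball sg by apply/subsetP => z zA; apply/ballP => //; apply: hsg.
have eA : A = ball sg by apply/eqP; rewrite eqEcard sub card_ball.
by split; [exists sg => pi; rewrite eA; apply: ballP | rewrite eA card_ball].
Qed.
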